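(* Let $\mathbf k$ be a commutative domain of characteristic zero, let $\phi(x)=\sum_{i=0}^r a_ix^i\in\mathbf k[x]$, and let $\omega=xy-\phi(x)$. The following are equivalent: (1) for every commutative Rota-Baxter algebra $(R,P)$ of weight $0$, the $\omega$-cover $\widetilde P$ of $P$ on $R^{\mathbb N}$ (weight-$0$ Hurwitz product) is a Rota-Baxter operator of weight $0$; (2) $\phi=a_0$ is constant, i.e. $\omega=xy-a_0$; (3) for every commutative Rota-Baxter algebra $(R,P)$ of weight $0$ and all $f\in R^{\mathbb N}$, $\widetilde P(f)=(P(f_0),a_0f_0,a_0f_1,a_0f_2,\dots)$.
   Context: A Rota-Baxter operator of weight $0$ on an algebra $A$ is a $\mathbf{k}$-linear $P$ with $P(x)P(y)=P(P(x)y)+P(xP(y))$. $R^{\mathbb N}$ is the set of sequences $(f_n)_{n\in\mathbb N}$ in $R$ with product $(fg)_n=\sum_{j=0}^n\binom{n}{j}f_{n-j}g_j$, and $(\partial_R f)_n=f_{n+1}$. For $\omega=xy-(\phi(x)+y\psi(x))$ with $\phi=\sum_{i=0}^r a_ix^i$, $\psi=\sum_{j=0}^s b_jx^j$ in $\mathbf k[x]$, the $\omega$-cover $\widetilde P$ of $P$ is the unique linear operator on $R^{\mathbb N}$ with $\widetilde P_0(f)=P(f_0)$ and $\widetilde P_n(f)=\sum_{i=0}^r a_if_{n-1+i}+\sum_{j=0}^s b_j\widetilde P_{n-1}(\partial_R^jf)$ for $n\ge1$, where $\widetilde P_n(f):=\widetilde P(f)_n$ (here $\psi=0$). *)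

From HB Require Import structures.
From mathcomp Require Import all_boot all_order all_algebra.
Set Implicit Arguments. Unset Strict Implicit. Unset Printing Implicit Defensive.
Import GRing.Theory.
Local Open Scope ring_scope.

Section Defs.
Variables (k : comNzRingType) (R : comAlgType k).

Definition is_RB0 (P : R -> R) : Prop :=
  (forall (a : k) (x y : R), P (a *: x + y) = a *: P x + P y) /\
  (forall x y : R, P x * P y = P (P x * y) + P (x * P y)).

Definition hmul (f g : nat -> R) : nat -> R :=
  fun n => \sum_(j < n.+1) 'C(n, j)%:R * f (n - j)%N * g j.

Definition dR (f : nat -> R) : nat -> R := fun n => f n.+1.

Definition is_RB0_seq (Q : (nat -> R) -> (nat -> R)) : Prop :=
  (forall (a : k) (f g : nat -> R) (n : nat),
      Q (fun m => a *: f m + g m) n = a *: Q f n + Q g n) /\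
  (forall (f g : nat -> R) (n : nat),
      hmul (Q f) (Q g) n = Q (hmul (Q f) g) n + Q (hmul f (Q g)) n).

(* The omega-cover of P for omega = xy - (phi(x) + y psi(x)):
   cover_0(f) = P(f_0),
   cover_n(f) = sum_i a_i f_{n-1+i} + sum_j b_j cover_{n-1}(dR^j f). *)
Fixpoint cover_n (phi psi : {poly k}) (P : R -> R) (n : nat) (f : nat -> R) : R :=
  match n with
  | 0 => P (f 0%N)
  | n'.+1 => \sum_(i < size phi) phi`_i *: f (n' + i)%N
             + \sum_(j < size psi) psi`_j *: cover_n phi psi P n' (iter j dR f)
  end.

Definition omega_cover (phi psi : {poly k}) (P : R -> R) : (nat -> R) -> (nat -> R) :=
  fun f n => cover_n phi psi P n f.

End Defs.

From HB Require Import structures.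
From mathcomp Require Import all_boot all_order all_algebra.
From mathcomp Require Import ring.
Set Implicit Arguments. Unset Strict Implicit. Unset Printing Implicit Defensive.
Import GRing.Theory.
Local Open Scope ring_scope.

(* For (3) => (1), write [Q] for the
   operator [f |-> (P f_0, a0 f_0, a0 f_1, ...)]: then [dR (Q f) = a0 f], and
   [dR] is a derivation of the Hurwitz product, so both sides of the
   Rota-Baxter identity at index [n + 1] equal [a0 (f . Q g + Q f . g)_n];
   at index 0 it is the identity for [P].  For (1) => (2), take the zero
   operator on [k] and the unit sequence at [d = deg phi]: at index 2 the
   identity reads [2 a_d^2 = 2 (d + 1) a_d^2], forcing [d = 0] in
   characteristic 0. *)

Section Hurwitz.
Variables (k : comNzRingType) (R : comAlgType k).
Implicit Types (u v f g : nat -> R) (a : k).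

Definition delta_seq (d : nat) : nat -> R := fun j => if j == d then 1 else 0.

Lemma eq_hmul [u u' v v'] :
  (forall m, u m = u' m) -> (forall m, v m = v' m) ->
  forall n, hmul u v n = hmul u' v' n.
Proof. by move=> eq_u eq_v n; apply: eq_bigr => j _; rewrite eq_u eq_v. Qed.

Lemma hmul0 u v : hmul u v 0 = u 0%N * v 0%N.
Proof. by rewrite /hmul big_ord1 /= mul1r. Qed.

Lemma hmulC u v n : hmul u v n = hmul v u n.
Proof.
rewrite /hmul (reindex_inj rev_ord_inj) /=; apply: eq_bigr => j _.
have le_jn : (j <= n)%N by rewrite -ltnS.
by rewrite subSS subKn // bin_sub // mulrAC.
Qed.

Lemma hmulZl a u v n : hmul (fun m => a *: u m) v n = a *: hmul u v n.
Proof. by rewrite /hmul scaler_sumr; apply: eq_bigr => j _; rewrite -scalerAr -scalerAl. Qed.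

Lemma hmulZr a u v n : hmul u (fun m => a *: v m) n = a *: hmul u v n.
Proof. by rewrite hmulC hmulZl hmulC. Qed.

Lemma hmul_dR u v n : hmul u v n.+1 = hmul (dR u) v n + hmul u (dR v) n.
Proof.
rewrite /hmul big_ord_recl bin0 subn0.
under eq_bigr => i _ do rewrite lift0 binS subSS natrD !mulrDl.
rewrite big_split /= addrA; congr (_ + _).
rewrite [RHS]big_ord_recl big_ord_recr /= bin0 subn0 bin_small // mul0r mul0r addr0.
congr (_ + _); apply: eq_bigr => i _.
by rewrite /dR /bump /= subnSK.
Qed.

Lemma hmul_delta_seq u d n : hmul u (delta_seq d) n = 'C(n, d)%:R * u (n - d)%N.
Proof.
rewrite /hmul /delta_seq; case: (ltnP n d) => [lt_nd | le_dn].
  rewrite bin_small // mul0r big1 // => j _.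
  by rewrite ltn_eqF ?mulr0 // (leq_trans (ltn_ord j)).
rewrite (bigD1 (Ordinal (le_dn : (d < n.+1)%N))) //= eqxx mulr1 big1 ?addr0 //.
by move=> j; rewrite -val_eqE /= => /negbTE ->; rewrite mulr0.
Qed.

Lemma eq_is_RB0_seq (Q Q' : (nat -> R) -> nat -> R) :
  (forall f f', (forall m, f m = f' m) -> forall n, Q' f n = Q' f' n) ->
  (forall f n, Q f n = Q' f n) -> is_RB0_seq Q' -> is_RB0_seq Q.
Proof.
move=> ext_Q' eqQ [lin_Q' RB_Q']; split=> [a f g n | f g n]; rewrite !eqQ //.
rewrite (eq_hmul (eqQ f) (eqQ g)) RB_Q'.
by rewrite (ext_Q' _ _ (eq_hmul (eqQ f) (frefl g))) (ext_Q' _ _ (eq_hmul (frefl f) (eqQ g))).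
Qed.

End Hurwitz.

Section ShiftCover.
Variables (k : comNzRingType) (R : comAlgType k) (a0 : k) (P : R -> R).

Definition shift_cover (f : nat -> R) (n : nat) : R :=
  if n is n'.+1 then a0 *: f n' else P (f 0%N).

Lemma eq_shift_cover f f' :
  (forall m, f m = f' m) -> forall n, shift_cover f n = shift_cover f' n.
Proof. by move=> eq_f [|n]; rewrite /shift_cover eq_f. Qed.

Lemma shift_cover_RB0 : is_RB0 P -> is_RB0_seq shift_cover.
Proof.
case=> lin_P RB_P; split=> [a f g [|n] | f g [|n]] /=.
- exact: lin_P.
- by rewrite scalerDr !scalerA mulrC.
- by rewrite !hmul0; apply: RB_P.
by rewrite hmul_dR hmulZl hmulZr addrC.
Qed.

End ShiftCover.

Section OmegaCover.
Variables (k : comNzRingType) (R : comAlgType k).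

Lemma omega_coverS (phi : {poly k}) (P : R -> R) f n :
  omega_cover phi 0 P f n.+1 = \sum_(i < size phi) phi`_i *: f (n + i)%N.
Proof. by rewrite /omega_cover /= size_poly0 big_ord0 addr0. Qed.

Lemma omega_cover_polyC (c : k) (P : R -> R) f n :
  omega_cover c%:P 0 P f n = shift_cover c P f n.
Proof.
case: n => // n; rewrite omega_coverS size_polyC.
have [-> | nz_c] := eqVneq c 0; first by rewrite big_ord0 /= scale0r.
by rewrite big_ord1 coefC addn0.
Qed.

End OmegaCover.

Lemma is_RB0_zero (k : comNzRingType) (R : comAlgType k) : is_RB0 (fun _ : R => 0).
Proof. by split=> *; rewrite ?scaler0 ?mulr0 ?addr0. Qed.

Section ZeroOperator.
Variables (k : comNzRingType) (phi : {poly k}).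

Let Q := omega_cover phi 0 (fun _ : k^o => 0).

Lemma RB0_seq_cover_zero_lead_coef :
  is_RB0_seq Q -> ((size phi).-1.*2)%:R * lead_coef phi ^+ 2 = 0.
Proof.
case=> _ RB_Q.
have [-> | nz_phi] := eqVneq phi 0; first by rewrite lead_coef0 expr0n mulr0.
rewrite lead_coefE; set d := (size phi).-1.
have size_phi : size phi = d.+1 by rewrite prednK ?size_poly_gt0.
set e := delta_seq k^o d.
have Q0 f : Q f 0 = 0 by [].
have Qe1 : Q e 1 = phi`_d.
  rewrite /Q omega_coverS size_phi big_ord_recr /= big1 ?add0r.
    by rewrite /e /delta_seq eqxx; apply: mulr1.
  by move=> i _; rewrite /e /delta_seq add0n ltn_eqF // scaler0.
have Q_hmul : Q (hmul (Q e) e) 2 = (d.+1)%:R * phi`_d ^+ 2.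
  rewrite {1}/Q omega_coverS size_phi big_ord_recr /= big1 ?add0r.
    rewrite hmul_delta_seq add1n subSnn Qe1 binSn.
    by rewrite [LHS]mulrCA expr2.
  move=> i _; rewrite hmul_delta_seq.
  suff -> : (1 + i - d = 0)%N by rewrite Q0 mulr0 scaler0.
  by apply/eqP; rewrite subn_eq0 add1n.
have Qe_sq : hmul (Q e) (Q e) 2 = 2%:R * phi`_d ^+ 2.
  by rewrite /hmul !big_ord_recr big_ord0 /= !Q0 Qe1 !mulr0 mul0r !add0r addr0 expr2 mulrA.
have Q_hmulC : Q (hmul e (Q e)) 2 = Q (hmul (Q e) e) 2.
  by rewrite /Q !omega_coverS; apply: eq_bigr => i _; rewrite hmulC.
have := RB_Q e e 2; rewrite Qe_sq Q_hmulC Q_hmul => RB_e.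
have -> : d.*2%:R * phi`_d ^+ 2 =
    d.+1%:R * phi`_d ^+ 2 + d.+1%:R * phi`_d ^+ 2 - 2%:R * phi`_d ^+ 2.
  by rewrite -addnn -(addn1 d) !natrD; ring.
by rewrite -RB_e subrr.
Qed.

End ZeroOperator.

Theorem proposition3p4 (k : idomainType) (hchar : [pchar k] =i pred0)
  (phi : {poly k}) :
  [<-> (* (1) *)
       (forall (R : comAlgType k) (P : R -> R),
          is_RB0 P -> is_RB0_seq (omega_cover phi 0 P));
       (* (2) *)
       phi = (phi`_0)%:P;
       (* (3) *)
       (forall (R : comAlgType k) (P : R -> R), is_RB0 P ->
          forall (f : nat -> R) (n : nat),
            omega_cover phi 0 P f n =
              (if n is n'.+1 then phi`_0 *: f n' else P (f 0%N)))].
Proof.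
split; last split.
- move=> RB_cover; have [/size1_polyC // | size_gt1] := leqP (size phi) 1.
  have := RB0_seq_cover_zero_lead_coef (RB_cover _ _ (is_RB0_zero k^o)).
  move/eqP; rewrite mulf_eq0 expf_eq0 lead_coef_eq0 (pcharf0P _).1 // double_eq0.
  by rewrite -size_poly_eq0 -subn1 subn_eq0 leqNgt size_gt1 gtn_eqF // ltnW.
- by move=> phi_const R P _ f n; rewrite [in LHS]phi_const omega_cover_polyC.
- move=> cover_shift R P RB_P.
  apply: (eq_is_RB0_seq (@eq_shift_cover _ _ phi`_0 P) (cover_shift R P RB_P)).
  exact: shift_cover_RB0.
Qed.
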